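(* Let $K=\mathbb{F}_q$, $S=K[t_1,\ldots,t_s]$, and let $\mathcal{X}=[A_1\times\cdots\times A_s]\subset\mathbb{P}^{s-1}$ be a projective nested cartesian set with $d_i=|A_i|$. Then $\delta_{\mathcal{X}}(1)=d_2\cdots d_s$.
   Context: Projective nested cartesian set: for subsets $A_1,\ldots,A_s$ of $K$, $\mathcal{X}=[A_1\times\cdots\times A_s]$ is the image of $(A_1\times\cdots\times A_s)\setminus\{0\}$ under $K^s\setminus\{0\}\to\mathbb{P}^{s-1}$, $x\mapsto[x]$, and it is required that (i) $\{0,1\}\subset A_i$ for all $i$; (ii) $a/b\in A_j$ whenever $1\leq i<j\leq s$, $a\in A_j$, $0\neq b\in A_i$; (iii) $d_1\leq\cdots\leq d_s$ where $d_i=|A_i|$. $I(\mathcal{X})$ is the vanishing ideal of $\mathcal{X}$ and $V_{\mathcal{X}}(f)$ the zero set in $\mathcal{X}$ of a form $f$. $\delta_{\mathcal{X}}(d)=\min\{|\mathcal{X}|-|V_{\mathcal{X}}(f)|: f\in S_d,\ f\notin I(\mathcal{X})\}$ is the minimum distance of the degree-$d$ projective Reed–Muller-type code on $\mathcal{X}$. *)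

From HB Require Import structures.
From mathcomp Require Import all_boot all_order all_algebra all_field.
From mathcomp Require Export mpoly.
Set Implicit Arguments. Unset Strict Implicit. Unset Printing Implicit Defensive.
Import GRing.Theory.
Local Open Scope ring_scope.

(* Vectors of K^s are finite functions 'I_s -> K.  A point of P^{s-1} is
   represented literally as its punctured line { c x | c in K^* } (x <> 0). *)
Section Proj.
Variables (K : finFieldType) (s : nat).

Definition projpt (x : {ffun 'I_s -> K}) : {set {ffun 'I_s -> K}} :=
  [set [ffun i => c * x i] | c in [set: K] :\ 0].

Definition cartset (A : 'I_s -> {set K}) : {set {ffun 'I_s -> K}} :=
  [set x : {ffun 'I_s -> K} | [forall i, x i \in A i]].

Definition projcart (A : 'I_s -> {set K}) : {set {set {ffun 'I_s -> K}}} :=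
  [set projpt x | x in [set y in cartset A | y != [ffun=> 0]]].

Definition proj_nested (A : 'I_s -> {set K}) : Prop :=
  [/\ (forall i, (0 \in A i) /\ (1 \in A i)),
      (forall i j : 'I_s, (i < j)%N -> forall a b, a \in A j -> b \in A i ->
         b != 0 -> a / b \in A j)
    & (forall i j : 'I_s, (i <= j)%N -> #|A i| <= #|A j|)%N].

Definition zeroset (X : {set {set {ffun 'I_s -> K}}}) (f : {mpoly K[s]}) :=
  [set P in X | [forall x in P, f.@[x] == 0]].

Definition vanishes_on (X : {set {set {ffun 'I_s -> K}}}) (f : {mpoly K[s]}) :=
  forall P, P \in X -> forall x, x \in P -> f.@[x] = 0.

Definition is_min_distance (X : {set {set {ffun 'I_s -> K}}}) (d m : nat) :=
  (exists f : {mpoly K[s]}, [/\ f \is d.-homog, ~ vanishes_on X f &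
        (#|X| - #|zeroset X f|)%N = m]) /\
  (forall f : {mpoly K[s]}, f \is d.-homog -> ~ vanishes_on X f ->
        (m <= #|X| - #|zeroset X f|)%N).
End Proj.

From mathcomp Require Import all_boot all_order all_algebra all_field.
From mathcomp Require Import mpoly.
Set Implicit Arguments. Unset Strict Implicit. Unset Printing Implicit Defensive.
Import GRing.Theory.
Local Open Scope ring_scope.

(* A point of X has a unique representative in A_1 x ... x A_s whose first
   nonzero coordinate x_t equals 1 (condition (ii) allows the rescaling); these
   representatives form the t-th layer, and |layer 0| = d_2 ... d_s.  The form
   t_1 vanishes exactly at the points without a representative in layer 0, so
   delta(1) <= d_2 ... d_s.  Conversely, for L = a_1 t_1 + ... + a_k t_k with
   a_k <> 0, L never vanishes on layer k, and the zeros of L in layer r < k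
   inject into layer r + 1.  Descending from k to 0 gives
   |layer 0| <= #{x in layers 0..k | L x <> 0}, and distinct layer vectors
   represent distinct points of X. *)

Lemma dhomog1E (R : nzRingType) (n : nat) (f : {mpoly R[n]}) :
  f \is 1.-homog -> f = \sum_i f@_U_(i) *: 'X_i.
Proof.
move=> hf; apply/mpolyP => m; rewrite raddf_sum /=.
have [mf|] := boolP (m \in msupp f).
  have /eqP/mdeg1P [j /eqP ->] := dhomog_mf hf mf.
  rewrite (bigD1 j) //= mcoeffZ mcoeffXU eqxx mulr1 big1 ?addr0 // => i hij.
  by rewrite mcoeffZ mcoeffXU (negbTE hij) mulr0.
rewrite mcoeff_msupp negbK => /eqP fm0; rewrite fm0 big1 // => i _.
by rewrite mcoeffZ mcoeffX; case: eqP => [->|_]; rewrite ?fm0 ?mul0r ?mulr0.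
Qed.

Lemma meval_dhomog1 (R : comNzRingType) (n : nat) (f : {mpoly R[n]})
    (x : 'I_n -> R) :
  f \is 1.-homog -> f.@[x] = \sum_i f@_U_(i) * x i.
Proof.
move/dhomog1E => {1}->; rewrite raddf_sum; apply: eq_bigr => i _ /=.
by rewrite mevalZ mevalXU.
Qed.

Lemma card_cartset (K : finFieldType) (s : nat) (A : 'I_s -> {set K}) :
  #|cartset A| = (\prod_i #|A i|)%N.
Proof.
have := card_family (fun i => mem (A i)).
rewrite foldrE big_map big_enum /= => <-.
rewrite cardsE; apply: eq_card => x; rewrite !inE.
by apply/forallP/familyP.
Qed.

Section Projective.
Variables (K : finFieldType) (s : nat).
Implicit Types (x y : {ffun 'I_s -> K}).

Lemma mem_projpt x : x \in projpt x.
Proof.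
apply/imsetP; exists 1; first by rewrite !inE oner_eq0.
by apply/ffunP => i; rewrite ffunE mul1r.
Qed.

Lemma projptP x y :
  y \in projpt x -> exists2 c, c != 0 & y = [ffun i => c * x i].
Proof. by case/imsetP => c; rewrite !inE andbT => hc ->; exists c. Qed.

Lemma projpt_scale c x : c != 0 -> projpt [ffun i => c * x i] = projpt x.
Proof.
move=> hc; apply/setP => y; apply/imsetP/imsetP => -[d].
  rewrite !inE andbT => hd ->; exists (d * c); first by rewrite !inE mulf_neq0.
  by apply/ffunP => i; rewrite !ffunE mulrA.
rewrite !inE andbT => hd ->; exists (d / c).
  by rewrite !inE mulf_neq0 ?invr_eq0.
by apply/ffunP => i; rewrite !ffunE mulrA divfK.
Qed.

Section Layers.
Variable A : 'I_s -> {set K}.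

Definition layer_box (t : nat) (j : 'I_s) : {set K} :=
  if (j < t)%N then [set 0] else if j == t :> nat then [set 1] else A j.

Definition layer (t : nat) := cartset (layer_box t).

Lemma card_layer t : #|layer t| = (\prod_(j < s | (t < j)%N) #|A j|)%N.
Proof.
rewrite card_cartset [RHS]big_mkcond; apply: eq_bigr => j _.
rewrite /layer_box; case: ltngtP => _; by rewrite ?cards1.
Qed.

Lemma layer_lt t x (j : 'I_s) : x \in layer t -> (j < t)%N -> x j = 0.
Proof.
by rewrite inE => /forallP/(_ j) + hjt; rewrite /layer_box hjt => /set1P.
Qed.

Lemma layer_eq t x (j : 'I_s) : x \in layer t -> j = t :> nat -> x j = 1.
Proof.
rewrite inE => /forallP/(_ j) + hj; rewrite /layer_box hj ltnn eqxx.
by move/set1P.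
Qed.

Lemma layer_gt t x (j : 'I_s) : x \in layer t -> (t < j)%N -> x j \in A j.
Proof.
rewrite inE => /forallP/(_ j) + htj; rewrite /layer_box ltnNge (ltnW htj).
by rewrite gtn_eqF.
Qed.

Lemma layer_lead t x (j : 'I_s) : x \in layer t -> x j != 0 -> (t <= j)%N.
Proof. by move=> hx; apply: contraR; rewrite -ltnNge => /(layer_lt hx) ->. Qed.

Lemma layer_disjoint t t' x :
  (t < s)%N -> (t < t')%N -> x \in layer t -> x \notin layer t'.
Proof.
move=> hts htt' hx; apply/negP => /(layer_lead (j := Ordinal hts)).
by rewrite (layer_eq hx) // oner_eq0 leqNgt htt' => /(_ isT).
Qed.

Lemma projpt_layer_inj t t' x y : (t < s)%N -> (t' < s)%N ->
  x \in layer t -> y \in layer t' -> projpt x = projpt y -> x = y.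
Proof.
wlog le_tt' : t t' x y / (t <= t')%N => [WH|hts _ hx hy exy].
  move=> hts ht's hx hy exy; case/orP: (leq_total t t') => le.
    exact: (WH t t').
  by apply/esym/(WH t' t).
have := mem_projpt y; rewrite -exy => /projptP [c hc eyx].
pose jt := Ordinal hts.
have ycx : y jt = c by rewrite eyx ffunE (layer_eq hx) ?mulr1.
have eq_tt' : t' = t.
  apply/eqP; rewrite eqn_leq le_tt' andbT.
  by apply: (layer_lead (j := jt) hy); rewrite ycx.
have c1 : c = 1 by rewrite -ycx (layer_eq hy).
by apply/ffunP => i; rewrite eyx ffunE c1 mul1r.
Qed.

Definition nonzeroset (f : {mpoly K[s]}) :=
  projcart A :\: zeroset (projcart A) f.

Lemma card_nonzeroset f :
  (#|projcart A| - #|zeroset (projcart A) f|)%N = #|nonzeroset f|.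
Proof.
rewrite cardsD (setIidPr _) //.
by apply/subsetP => P; rewrite inE => /andP [].
Qed.

Hypothesis A01 : forall i, (0 \in A i) /\ (1 \in A i).

Lemma layer_sub_cartset t : layer t \subset cartset A.
Proof.
apply/subsetP => x; rewrite !inE => /forallP hx; apply/forallP => j.
move: (hx j).
by rewrite /layer_box; case: ifP => _; [|case: ifP => _] => // /set1P ->;
  case: (A01 j).
Qed.

Lemma projpt_layer t x : (t < s)%N -> x \in layer t -> projpt x \in projcart A.
Proof.
move=> hts hx; apply/imsetP; exists x => //.
rewrite inE (subsetP (layer_sub_cartset t)) //=; apply: contraTneq isT => x0.
by have := layer_eq (j := Ordinal hts) hx erefl; rewrite x0 ffunE => /eqP;
  rewrite eq_sym oner_eq0.
Qed.

Lemma projpt_layer_nonzeroset f t x :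
  (t < s)%N -> x \in layer t -> f.@[x] != 0 -> projpt x \in nonzeroset f.
Proof.
move=> hts hx hf; rewrite !inE (projpt_layer hts hx) andbT.
by apply/forall_inPn; exists x; rewrite ?mem_projpt.
Qed.

Lemma delta_layer0 (i0 : 'I_s) :
  i0 = 0%N :> nat -> [ffun j => (j == i0)%:R] \in layer 0.
Proof.
move=> i00; rewrite inE; apply/forallP => j; rewrite /layer_box ltn0 ffunE -i00.
have [->|/negbTE ji0] := eqVneq j i0; first by rewrite eqxx set11.
by rewrite [j == _ :> nat]ji0; case: (A01 j).
Qed.

Hypothesis A_div : forall i j : 'I_s, (i < j)%N -> forall a b,
  a \in A j -> b \in A i -> b != 0 -> a / b \in A j.

Lemma scale_layer0 (i0 : 'I_s) x : i0 = 0%N :> nat -> x \in cartset A ->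
  x i0 != 0 -> [ffun i => (x i0)^-1 * x i] \in layer 0.
Proof.
move=> i00; rewrite inE => /forallP hx xi0; rewrite inE; apply/forallP => j.
rewrite /layer_box ltn0 ffunE -i00; case: eqP => [/ord_inj ->|ji0].
  by rewrite mulVf // set11.
rewrite mulrC; apply: A_div (hx j) (hx i0) xi0.
by rewrite ltn_neqAle eq_sym (introN eqP ji0) i00.
Qed.

Lemma nonzeroset_X0_sub (i0 : 'I_s) : i0 = 0%N :> nat ->
  nonzeroset 'X_i0 \subset [set projpt x | x in layer 0].
Proof.
move=> i00; apply/subsetP => P /setDP [hX].
rewrite inE hX => /forall_inPn [y + yX].
case/imsetP: hX => x; rewrite inE => /andP [hx _] -> hy.
have xi0 : x i0 != 0.
  case/projptP: hy => [c _ eyx]; move: yX; rewrite eyx mevalXU ffunE.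
  by apply: contra => /eqP ->; rewrite mulr0.
apply/imsetP; exists [ffun i => (x i0)^-1 * x i]; first exact: scale_layer0.
by rewrite projpt_scale ?invr_eq0.
Qed.

Section LinearForm.
Variables (a : 'I_s -> K) (k : 'I_s).
Hypotheses (ak_neq0 : a k != 0) (a_gt : forall j : 'I_s, (k < j)%N -> a j = 0).

Definition lform x := \sum_i a i * x i.

Definition lform_nz := [set x | lform x != 0].

Lemma lform_inj x y :
  lform x = lform y -> (forall j, j != k -> x j = y j) -> x = y.
Proof.
move=> exy exy_off; apply/ffunP => j; have [->|/exy_off //] := eqVneq j k.
have : lform x - lform y = a k * (x k - y k).
  rewrite /lform -sumrB (bigD1 k) //= big1 ?addr0 ?mulrBr // => i hi.
  by rewrite exy_off // subrr.
rewrite exy subrr => /esym/eqP; rewrite mulf_eq0 (negbTE ak_neq0) subr_eq0.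
by move/eqP.
Qed.

Lemma lform_layer x : x \in layer k -> lform x = a k.
Proof.
move=> hx; rewrite /lform (bigD1 k) //= (layer_eq hx) // mulr1 big1 ?addr0 //.
move=> i /negbTE hik; have [hlt|hgt|/ord_inj eik] := ltngtP i k.
- by rewrite (layer_lt hx) // mulr0.
- by rewrite a_gt // mul0r.
- by rewrite eik eqxx in hik.
Qed.

(* Sends a zero x of lform in layer r to layer r1 = r + 1.  Since x_k is
   determined by the other coordinates through lform x = 0, the k-th slot is
   free to store 1 / x_r1, which lies in A_k by (ii). *)
Definition shift (r1 : 'I_s) x : {ffun 'I_s -> K} :=
  [ffun j : 'I_s => if (j < r1)%N then 0 else if j == r1 :> nat then 1
     else if j == k then (x r1)^-1 else x j].

Lemma shift_layer r (r1 : 'I_s) x : r1 = r.+1 :> nat -> (r1 <= k)%N ->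
  x \in layer r -> shift r1 x \in layer r1.
Proof.
move=> r1E r1k hx; rewrite inE; apply/forallP => j; rewrite /layer_box ffunE.
case: ifP => [_|/negbT]; first exact: set11.
case: ifP => [_ _|/negbT jr1]; first exact: set11.
rewrite -leqNgt leq_eqVlt eq_sym (negbTE jr1) /= => r1j.
have r1x : (r < r1)%N by rewrite r1E.
have [ejk|_] := eqVneq j k; last exact: layer_gt hx (ltn_trans r1x r1j).
subst j.
have [->|xr1] := eqVneq (x r1) 0; first by rewrite invr0; case: (A01 k).
rewrite -div1r; apply: A_div r1j _ _ (A01 k).2 _ xr1.
exact: layer_gt hx r1x.
Qed.

Lemma shift_inj r (r1 : 'I_s) : r1 = r.+1 :> nat -> (r1 <= k)%N ->
  {in layer r :\: lform_nz &, injective (shift r1)}.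
Proof.
move=> r1E r1k x y /setDP [hx]; rewrite inE negbK => /eqP x0.
move=> /setDP [hy]; rewrite inE negbK => /eqP y0 exy.
apply: lform_inj => [|j jk]; first by rewrite x0 y0.
have [jr1|r1j|/ord_inj jr1] := ltngtP j r1.
- move: jr1; rewrite r1E ltnS leq_eqVlt => /orP [/eqP jr|jr].
    by rewrite (layer_eq hx) ?(layer_eq hy).
  by rewrite (layer_lt hx) ?(layer_lt hy).
- have := congr1 (fun z : {ffun 'I_s -> K} => z j) exy.
  by rewrite !ffunE ltnNge (ltnW r1j) gtn_eqF // (negbTE jk).
- have := congr1 (fun z : {ffun 'I_s -> K} => z k) exy.
  rewrite !ffunE ltnNge r1k /= -jr1 (inj_eq val_inj) eq_sym (negbTE jk).
  by rewrite eqxx => /invr_inj.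
Qed.

Lemma card_layer_lform_zeros r : (r < k)%N ->
  (#|layer r :\: lform_nz| <= #|layer r.+1|)%N.
Proof.
move=> rk; pose r1 := Ordinal (leq_ltn_trans rk (ltn_ord k)).
rewrite -(card_in_imset (shift_inj (r1 := r1) erefl rk)).
apply/subset_leq_card/subsetP => _ /imsetP [x /setDP [hx _] ->].
exact: (@shift_layer r r1 x erefl rk hx).
Qed.

Definition nz_layers (r : nat) :=
  [set x in lform_nz | [exists t : 'I_s, (r <= t <= k)%N && (x \in layer t)]].

Lemma nz_layers_split r : (r < k)%N ->
  (layer r :&: lform_nz) :|: nz_layers r.+1 \subset nz_layers r.
Proof.
move=> rk; apply/subsetP => x /setUP [/setIP [hx nzx]|].
  rewrite inE nzx; apply/existsP; exists (Ordinal (ltn_trans rk (ltn_ord k))).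
  by rewrite /= leqnn ltnW // hx.
rewrite !inE => /andP [-> /existsP [t /andP [/andP [rt tk] xt]]].
by apply/existsP; exists t; rewrite (ltnW rt) tk xt.
Qed.

Lemma layer_nz_layers_disjoint r : (r < s)%N ->
  [disjoint layer r & nz_layers r.+1].
Proof.
move=> rs; apply/pred0P => x /=; apply/negP => /andP [hx].
rewrite inE => /andP [_ /existsP [t /andP [/andP [rt _] xt]]].
by have := layer_disjoint rs rt hx; rewrite xt.
Qed.

Lemma card_layer_le_nz_layers r : (r <= k)%N ->
  (#|layer r| <= #|nz_layers r|)%N.
Proof.
move=> rk; rewrite -(subKn rk); elim: (k - r)%N (leq_subr r k) => [_|n IH nk].
  rewrite subn0; apply/subset_leq_card/subsetP => x hx.
  rewrite !inE lform_layer // ak_neq0; apply/existsP; exists k.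
  by rewrite !leqnn hx.
set q := (k - n.+1)%N; have qS : q.+1 = (k - n)%N by rewrite subnSK.
have qk : (q < k)%N by rewrite qS leq_subr.
have qs : (q < s)%N := ltn_trans qk (ltn_ord k).
rewrite -(cardsID lform_nz (layer q)).
apply: leq_trans (leq_add (leqnn _) (card_layer_lform_zeros qk)) _.
rewrite qS; apply: leq_trans (leq_add (leqnn _) (IH (ltnW nk))) _; rewrite -qS.
have := (leq_card_setU (layer q :&: lform_nz) (nz_layers q.+1)).2.
rewrite (disjointWl (subsetIl _ _) (layer_nz_layers_disjoint qs)) => /eqP <-.
exact/subset_leq_card/nz_layers_split.
Qed.

Lemma card_layer0_le_nonzeroset (f : {mpoly K[s]}) :
  (forall x, f.@[x] = lform x) -> (#|layer 0| <= #|nonzeroset f|)%N.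
Proof.
move=> fE; apply: leq_trans (card_layer_le_nz_layers (leq0n k)) _.
have nz_layersP x : x \in nz_layers 0 ->
    [/\ lform x != 0 & exists t : 'I_s, x \in layer t].
  by rewrite !inE => /andP [-> /existsP [t /andP [_ xt]]]; split=> //; exists t.
rewrite -(card_in_imset (f := @projpt K s)); last first.
  move=> x y /nz_layersP [_ [t xt]] /nz_layersP [_ [t' yt]].
  exact: projpt_layer_inj (ltn_ord t) (ltn_ord t') xt yt.
apply/subset_leq_card/subsetP => _ /imsetP [x /nz_layersP [nzx [t xt]] ->].
by apply: projpt_layer_nonzeroset (ltn_ord t) xt _; rewrite fE.
Qed.

End LinearForm.

Lemma card_layer0_le_nonzeroset_homog1 (f : {mpoly K[s]}) :
  f \is 1.-homog -> f != 0 -> (#|layer 0| <= #|nonzeroset f|)%N.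
Proof.
move=> hf fn0; have [i fi] : exists i, f@_U_(i) != 0.
  apply/existsP; apply: contraNT fn0 => /existsPn f0.
  rewrite (dhomog1E hf) big1 // => i _.
  by have := f0 i; rewrite negbK => /eqP ->; rewrite scale0r.
have [k fk kmax] := @arg_maxnP _ i (fun j => f@_U_(j) != 0) val fi.
apply: (card_layer0_le_nonzeroset (a := fun j => f@_U_(j)) fk) => [j kj|x].
  by apply/eqP; apply: contraTT kj => /kmax; rewrite -leqNgt.
exact: meval_dhomog1.
Qed.

End Layers.
End Projective.

Theorem proposition6p8 (K : finFieldType) (s : nat) (hs : (0 < s)%N)
    (A : 'I_s -> {set K}) (hA : proj_nested A) :
  is_min_distance (projcart A) 1
    (\prod_(i < s | (0 < i)%N) #|A i|)%N.
Proof.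
case: hA => A01 A_div _; pose i0 : 'I_s := Ordinal hs.
have homogX : ('X_i0 : {mpoly K[s]}) \is 1.-homog.
  by rewrite dhomogX; apply/eqP; exact: mdeg1.
split.
- exists 'X_i0; split=> //.
  + move=> vanish; have e0 := delta_layer0 A01 (i0 := i0) erefl.
    have := vanish _ (projpt_layer A01 hs e0) _ (mem_projpt _).
    by rewrite mevalXU ffunE eqxx => /eqP; rewrite oner_eq0.
  + rewrite card_nonzeroset -card_layer; apply/eqP; rewrite eqn_leq.
    rewrite card_layer0_le_nonzeroset_homog1 // ?andbT.
      have X0_sub := nonzeroset_X0_sub A_div (i0 := i0) erefl.
      exact: leq_trans (subset_leq_card X0_sub) (leq_imset_card _ _).
    apply/eqP => /mpolyP/(_ U_(i0)%MM).
    by rewrite mcoeffXU eqxx mcoeff0 => /eqP; rewrite oner_eq0.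
- move=> f hf vanish; rewrite card_nonzeroset -card_layer.
  apply: card_layer0_le_nonzeroset_homog1 => //; apply/eqP => f0; apply: vanish.
  by rewrite f0 => P _ x _; rewrite meval0.
Qed.
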